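(* In a $2^K$ factorial experiment with a set of effects of interest $\mathcal F_+\subsetneq\mathcal P_K$, for each $*\in\{N,F,L\}$, $\tilde\tau_{*,u,+}=C_{S,+}\hat Y_{*,r}$ and $\tilde\Omega_{*,u,+}=C_{S,+}\hat\Psi_{*,r}C_{S,+}^T$.
   Context: A $2^K$ factorial experiment: $K$ binary factors, $Q=2^K$ treatment levels $q=(z_1,\dots,z_K)\in\{-1,+1\}^K$ identified with $1,\dots,Q$ in lexicographical order ($-1$ before $+1$). $N$ units with outcomes $Y_i$, covariates $x_i\in\mathbb R^J$ ($\sum_ix_i=0$), factor levels $Z_{ik}\in\{-1,+1\}$, and treatment indicator vector $t_i\in\{0,1\}^Q$. $\mathcal P_K$ is the set of nonempty subsets of $\{1,\dots,K\}$, $Z_{i,\mathcal K}=\prod_{k\in\mathcal K}Z_{ik}$, $c_{\mathcal K}\in\mathbb R^Q$ has entry $2^{-(K-1)}\prod_{k\in\mathcal K}z_k$ at level $(z_1,\dots,z_K)$. Given $\mathcal F_+\subsetneq\mathcal P_K$ with $\mathcal F_-=\mathcal P_K\setminus\mathcal F_+\ne\emptyset$, $C_{S,+}$ (resp. $C_{S,-}$) is the matrix with rows $c_{\mathcal K}^T$, $\mathcal K\in\mathcal F_+$ (resp. $\mathcal F_-$). Factor-unsaturated OLS regressions: (N) $Y_i\sim1+\sum_{\mathcal K\in\mathcal F_+}Z_{i,\mathcal K}$; (F) $Y_i\sim1+\sum_{\mathcal K\in\mathcal F_+}Z_{i,\mathcal K}+x_i$; (L) $Y_i\sim1+\sum_{\mathcal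 K\in\mathcal F_+}Z_{i,\mathcal K}+x_i+\sum_{\mathcal K\in\mathcal F_+}Z_{i,\mathcal K}x_i$. $\tilde\tau_{*,u,+}$ is the vector of 2 times the OLS coefficients of $Z_{i,\mathcal K}$, $\mathcal K\in\mathcal F_+$ (ordered as the rows of $C_{S,+}$), and $\tilde\Omega_{*,u,+}$ its Eicker–Huber–White covariance estimator from the same fit (EHW for coefficients: corresponding block of $(X^TX)^{-1}X^T\mathrm{diag}(\hat\epsilon_i^2)X(X^TX)^{-1}$; scaled by 4). Restricted least squares: $\chi_{L,i}=(t_i^T,(t_i\otimes x_i)^T)^T$, $\chi_L$ the matrix with rows $\chi_{L,i}^T$ (assume $\chi_L^T\chi_L$ nonsingular); $\theta=(\theta_Y^T,\theta_\gamma^T)^T$ with $\theta_Y\in\mathbb R^Q$, $\theta_\gamma=(\theta_{\gamma,1}^T,\dots,\theta_{\gamma,Q}^T)^T$, $\theta_{\gamma,q}\in\mathbb R^J$. For a restriction $R\theta=0$, $\hat\theta_r=\arg\min_\theta\sum_i(Y_i-\chi_{L,i}^T\theta)^2$ s.t. $R\theta=0$; with $M_r=(\chi_L^T\chi_L)^{-1}R^T\{R(\chi_L^T\chi_L)^{-1}R^T\}^{-1}$, RLS residuals $\hat\epsilon_{r,i}$ and $\hat\Sigma_r=(\chi_L^T\chi_L)^{-1}\chi_L^T\mathrm{diag}(\hat\epsilon_{r,i}^2)\chi_L(\chi_L^T\chi_L)^{-1}$, the covariance estimator of the $\theta_Y$-part is the upper-left $Q\times Q$ block of $(I-M_rR)\hat\Sigma_r(I-M_rR)^T$.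 $\hat Y_{*,r}$ and $\hat\Psi_{*,r}$ are the $\theta_Y$-part of $\hat\theta_r$ and this covariance estimator under the restrictions: (N) $C_{S,-}\theta_Y=0$, $\theta_\gamma=0$; (F) $C_{S,-}\theta_Y=0$, $\theta_{\gamma,1}=\cdots=\theta_{\gamma,Q}$; (L) $C_{S,-}\theta_Y=0$, $(C_{S,-}\otimes I_J)\theta_\gamma=0$. *)

From HB Require Import structures.
From mathcomp Require Import all_boot all_order all_algebra.
Set Implicit Arguments. Unset Strict Implicit. Unset Printing Implicit Defensive.
Import Order.TTheory GRing.Theory Num.Theory.
Local Open Scope ring_scope.

Lemma kdiv_lt m n (a : 'I_(m * n)) : (a %/ n < m)%N.
Proof.
case: n a => [|n] a; first by case: a => a /=; rewrite muln0.
by rewrite ltn_divLR // ltn_ord.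
Qed.
Lemma kmod_lt m n (a : 'I_(m * n)) : (a %% n < n)%N.
Proof.
case: n a => [|n] a; first by case: a => a /=; rewrite muln0.
by rewrite ltn_pmod.
Qed.
Definition kdiv m n (a : 'I_(m * n)) : 'I_m := Ordinal (kdiv_lt a).
Definition kmod m n (a : 'I_(m * n)) : 'I_n := Ordinal (kmod_lt a).

(** Kronecker product A (x) B, with (i,k) <-> i*n2 + k ordering. *)
Definition kron (R : pzRingType) m1 n1 m2 n2 (A : 'M[R]_(m1, n1)) (B : 'M[R]_(m2, n2))
  : 'M[R]_(m1 * m2, n1 * n2) :=
  \matrix_(a, b) (A (kdiv a) (kdiv b) * B (kmod a) (kmod b)).

Section Factorial.
Variable R : realFieldType.
Variable K : nat.

(** Treatment levels q = 0 .. 2^K - 1 (paper's 1..Q), in lexicographic order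
    of (z_1,...,z_K), -1 before +1: z_k(q) = +1 iff bit (K-1-k) of q is set. *)
Definition zlev (q : 'I_(2 ^ K)) (k : 'I_K) : R :=
  if odd (q %/ 2 ^ (K - k.+1)) then 1 else -1.

Definition cvec (S : {set 'I_K}) : 'rV[R]_(2 ^ K) :=
  \row_q ((2%:R / (2 ^ K)%:R) * \prod_(k in S) zlev q k).

Definition Fminus (Fp : {set {set 'I_K}}) : {set {set 'I_K}} :=
  [set S : {set 'I_K} | (S != set0) && (S \notin Fp)].

Definition CS (F : {set {set 'I_K}}) : 'M[R]_(#|F|, 2 ^ K) :=
  \matrix_(i, q) cvec (enum_val i) 0 q.

Variable N J : nat.
(** w i = treatment level of unit i; X = covariates (row i = x_i^T); Y outcomes. *)
Variable w : 'I_N -> 'I_(2 ^ K).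
Variable X : 'M[R]_(N, J).
Variable Y : 'cV[R]_N.
Variable Fp : {set {set 'I_K}}.

Definition Zval (i : 'I_N) (S : {set 'I_K}) : R := \prod_(k in S) zlev (w i) k.
Definition ZF : 'M[R]_(N, #|Fp|) := \matrix_(i, j) Zval i (enum_val j).

(** Design matrices of the factor-unsaturated regressions. *)
Definition design_N : 'M[R]_(N, 1 + #|Fp|) := row_mx (const_mx 1) ZF.
Definition design_F : 'M[R]_(N, 1 + #|Fp| + J) := row_mx design_N X.
(** interactions Z_{i,S} x_{ij}, columns (S,j) in block-major order *)
Definition interact : 'M[R]_(N, #|Fp| * J) :=
  \matrix_(i, a) (ZF i (kdiv a) * X i (kmod a)).
Definition design_L : 'M[R]_(N, 1 + #|Fp| + J + #|Fp| * J) :=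
  row_mx design_F interact.

Definition ols d (D : 'M[R]_(N, d)) : 'cV[R]_d := invmx (D^T *m D) *m D^T *m Y.
Definition ehw d (D : 'M[R]_(N, d)) : 'M[R]_d :=
  let e := Y - D *m ols D in
  invmx (D^T *m D) *m D^T *m diag_mx (\row_i (e i 0 ^+ 2)) *m D
    *m invmx (D^T *m D).

(** selection of the coefficients of Z_{i,S}, S in F_+ (columns 2..1+|F_+|) *)
Definition selZ d : 'M[R]_(#|Fp|, d) :=
  \matrix_(j, c) ((nat_of_ord c == j.+1)%N)%:R.

Definition tau_u d (D : 'M[R]_(N, d)) : 'cV[R]_#|Fp| := 2%:R *: (selZ d *m ols D).
Definition Omega_u d (D : 'M[R]_(N, d)) : 'M[R]_#|Fp| :=
  4%:R *: (selZ d *m ehw D *m (selZ d)^T).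

(** chi_L : rows (t_i^T, (t_i (x) x_i)^T) *)
Definition tvec (i : 'I_N) : 'rV[R]_(2 ^ K) := \row_q ((w i == q)%:R).
Definition chiL : 'M[R]_(N, 2 ^ K + 2 ^ K * J) :=
  \matrix_(i, c) row_mx (tvec i)
     (\row_a (tvec i 0 (kdiv a) * X i (kmod a))) 0 c.

Definition SSR (th : 'cV[R]_(2 ^ K + 2 ^ K * J)) : R :=
  \sum_i ((Y - chiL *m th) i 0) ^+ 2.

Definition is_rls r (Rm : 'M[R]_(r, 2 ^ K + 2 ^ K * J))
  (th : 'cV[R]_(2 ^ K + 2 ^ K * J)) : Prop :=
  Rm *m th = 0 /\
  forall th', Rm *m th' = 0 -> SSR th <= SSR th'.

Definition Psi_r r (Rm : 'M[R]_(r, 2 ^ K + 2 ^ K * J))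
  (th : 'cV[R]_(2 ^ K + 2 ^ K * J)) : 'M[R]_(2 ^ K) :=
  let B := invmx (chiL^T *m chiL) in
  let Mr := B *m Rm^T *m invmx (Rm *m B *m Rm^T) in
  let e := Y - chiL *m th in
  let Sig := B *m chiL^T *m diag_mx (\row_i (e i 0 ^+ 2)) *m chiL *m B in
  let P := 1%:M - Mr *m Rm in
  ulsubmx (P *m Sig *m P^T : 'M_(2 ^ K + 2 ^ K * J)).

(* (N): C_{S,-} theta_Y = 0 and theta_gamma = 0 *)
Definition R_N : 'M[R]_(#|Fminus Fp| + 2 ^ K * J, 2 ^ K + 2 ^ K * J) :=
  block_mx (CS (Fminus Fp)) 0 0 1%:M.
(* (F): C_{S,-} theta_Y = 0 and theta_{gamma,q} - theta_{gamma,q+1} = 0 *)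
Definition diffmx : 'M[R]_((2 ^ K).-1, 2 ^ K) :=
  \matrix_(r, q) (((nat_of_ord q == r)%N)%:R - ((nat_of_ord q == r.+1)%N)%:R).
Definition R_F : 'M[R]_(#|Fminus Fp| + (2 ^ K).-1 * J, 2 ^ K + 2 ^ K * J) :=
  block_mx (CS (Fminus Fp)) 0 0 (kron diffmx (1%:M : 'M_J)).
(* (L): C_{S,-} theta_Y = 0 and (C_{S,-} (x) I_J) theta_gamma = 0 *)
Definition R_L : 'M[R]_(#|Fminus Fp| + #|Fminus Fp| * J, 2 ^ K + 2 ^ K * J) :=
  block_mx (CS (Fminus Fp)) 0 0 (kron (CS (Fminus Fp)) (1%:M : 'M_J)).

Definition equivalence d (D : 'M[R]_(N, d)) r (Rm : 'M[R]_(r, 2 ^ K + 2 ^ K * J)) : Prop :=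
  forall th, is_rls Rm th ->
    tau_u D = CS Fp *m usubmx th /\
    Omega_u D = CS Fp *m Psi_r Rm th *m (CS Fp)^T.

End Factorial.

From Pilot Require Import Defs.
From HB Require Import structures.
From mathcomp Require Import all_boot all_order all_algebra.
From mathcomp Require Import zify ring.
Import Order.TTheory GRing.Theory Num.Theory.
Set Implicit Arguments. Unset Strict Implicit.

(* Restricted least squares under [Rm θ = 0] is ordinary least squares in a
   reparametrisation [θ = A β] whose columns span [ker Rm]: the minimiser is
   [A] times the OLS fit of [Y] on [χ A], and since
   [(I - M_r Rm) (χ^T χ)^-1 = A (A^T χ^T χ A)^-1 A^T] the projected sandwich
   estimator is [A Ω A^T] with [Ω] the EHW covariance of that fit.  For each of
   the three restrictions there is such an [A] with [χ_L A] equal to the design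
   matrix of the factor-unsaturated regression and [C_{S,+}] applied to its
   [θ_Y] block equal to twice the selector of the [Z_{i,K}] coefficients.  Both
   facts rest on the orthogonality [Σ_q Z_{q,S} Z_{q,T} = 2^K [S = T]] of the
   factorial contrasts, which holds because, once levels are identified with
   bit vectors, the sum factorises over the [K] factors. *)

(** * Kronecker products *)

Section KronIndex.
Variables m n : nat.

Lemma kpair_lt (i : 'I_m) (j : 'I_n) : i * n + j < m * n.
Proof. have := ltn_ord i; have := ltn_ord j; nia. Qed.

Definition kpair (p : 'I_m * 'I_n) : 'I_(m * n) := Ordinal (kpair_lt p.1 p.2).

Lemma kdiv_pair p : kdiv (kpair p) = p.1.
Proof.
apply: val_inj => /=; have n_gt0 : 0 < n by have := ltn_ord p.2; lia.
by rewrite divnMDl // divn_small ?addn0.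
Qed.

Lemma kmod_pair p : kmod (kpair p) = p.2.
Proof. by apply: val_inj; rewrite /= modnMDl modn_small. Qed.

Lemma kpairK (a : 'I_(m * n)) : kpair (kdiv a, kmod a) = a.
Proof. by apply: val_inj; rewrite /= -divn_eq. Qed.

Lemma kdivmod_inj (a b : 'I_(m * n)) : kdiv a = kdiv b -> kmod a = kmod b -> a = b.
Proof. by move=> eq_div eq_mod; rewrite -(kpairK a) -(kpairK b) eq_div eq_mod. Qed.

Lemma sum_kron (V : nmodType) (F : 'I_m -> 'I_n -> V) :
  (\sum_(a : 'I_(m * n)) F (kdiv a) (kmod a) = \sum_(i < m) \sum_(j < n) F i j)%R.
Proof.
rewrite pair_big (reindex kpair) /=.
  by apply: eq_bigr => p _; rewrite kdiv_pair kmod_pair.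
exists (fun a => (kdiv a, kmod a)) => [[i j] _|a _]; last exact: kpairK.
by rewrite kdiv_pair kmod_pair.
Qed.

End KronIndex.

Local Open Scope ring_scope.

Lemma sum_delta (R : pzSemiRingType) (I : finType) (j : I) (F : I -> R) :
  \sum_i (i == j)%:R * F i = F j.
Proof.
rewrite (bigD1 j) //= eqxx mul1r big1 ?addr0 // => i /negbTE->; exact: mul0r.
Qed.

Lemma sum_nat_delta (R : pzSemiRingType) n i (F : nat -> R) : (i < n)%N ->
  \sum_(q < n) (q == i :> nat)%:R * F q = F i.
Proof. by move=> lt_in; exact: (sum_delta (Ordinal lt_in) (fun q : 'I_n => F q)). Qed.

Lemma usubmx_row_mx (R : Type) m1 m2 n1 n2 (A : 'M[R]_(m1 + m2, n1)) (B : 'M[R]_(m1 + m2, n2)) :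
  usubmx (row_mx A B) = row_mx (usubmx A) (usubmx B).
Proof. by rewrite -{1}[A]vsubmxK -{1}[B]vsubmxK -block_mxEh block_mxEv col_mxKu. Qed.

Section Kron.
Variable R : comPzRingType.

Lemma mul_kron m1 n1 m2 n2 p1 p2 (A : 'M[R]_(m1, n1)) (B : 'M[R]_(m2, n2))
    (C : 'M[R]_(n1, p1)) (D : 'M[R]_(n2, p2)) :
  kron A B *m kron C D = kron (A *m C) (B *m D).
Proof.
apply/matrixP => a b; rewrite !mxE.
under eq_bigr => c _ do rewrite !mxE.
rewrite (sum_kron (fun i j => A (kdiv a) i * B (kmod a) j * (C i (kdiv b) * D j (kmod b)))).
rewrite big_distrlr /=; apply: eq_bigr => i _; apply: eq_bigr => j _; ring.
Qed.

Lemma kron1 m n : kron (1%:M : 'M[R]_m) (1%:M : 'M[R]_n) = 1%:M.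
Proof.
apply/matrixP => a b; rewrite !mxE.
have [->|neq_ab] := eqVneq a b; first by rewrite !eqxx mulr1.
have [eq_div|] := eqVneq (kdiv a) (kdiv b); last by rewrite mul0r.
have [eq_mod|] := eqVneq (kmod a) (kmod b); last by rewrite mulr0.
by rewrite (kdivmod_inj eq_div eq_mod) eqxx in neq_ab.
Qed.

Lemma kronZl m1 n1 m2 n2 (c : R) (A : 'M[R]_(m1, n1)) (B : 'M[R]_(m2, n2)) :
  kron (c *: A) B = c *: kron A B.
Proof. by apply/matrixP => a b; rewrite !mxE mulrA. Qed.

Lemma kron0l m1 n1 m2 n2 (B : 'M[R]_(m2, n2)) : kron (0 : 'M[R]_(m1, n1)) B = 0.
Proof. by apply/matrixP => a b; rewrite !mxE mul0r. Qed.

Lemma trmx_kron m1 n1 m2 n2 (A : 'M[R]_(m1, n1)) (B : 'M[R]_(m2, n2)) :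
  (kron A B)^T = kron A^T B^T.
Proof. by apply/matrixP => a b; rewrite !mxE. Qed.

End Kron.

(** * Restricted least squares as reparametrised least squares *)

Section Gram.
Variable R : realFieldType.

Lemma sqnormE k (x : 'cV[R]_k) : (x^T *m x) 0 0 = \sum_j x j 0 ^+ 2.
Proof. by rewrite mxE; apply: eq_bigr => j _; rewrite mxE expr2. Qed.

Lemma sqnorm_ge0 k (x : 'cV[R]_k) : 0 <= (x^T *m x) 0 0.
Proof. by rewrite sqnormE; apply: sumr_ge0 => j _; exact: sqr_ge0. Qed.

Lemma sqnorm_eq0 k (x : 'cV[R]_k) : (x^T *m x) 0 0 = 0 -> x = 0.
Proof.
rewrite sqnormE => /psumr_eq0P sum0; apply/matrixP => i j; rewrite (ord1 j) mxE.
by apply/eqP; rewrite -sqrf_eq0 sum0 // => l _; exact: sqr_ge0.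
Qed.

Lemma gram_unit n d (D : 'M[R]_(n, d)) :
  (forall z : 'cV_d, D *m z = 0 -> z = 0) -> D^T *m D \in unitmx.
Proof.
move=> D_inj; rewrite -row_free_unit; apply: inj_row_free => u uDD0.
apply: trmx_inj; rewrite trmx0; apply: D_inj; apply: sqnorm_eq0.
by rewrite trmx_mul trmxK !mulmxA -(mulmxA u) uDD0 mul0mx mxE.
Qed.

End Gram.

Section RestrictedLeastSquares.
Variables (R : realFieldType) (n p : nat) (chi : 'M[R]_(n, p)) (Y : 'cV[R]_n).

Definition sse (th : 'cV[R]_p) : R := \sum_i ((Y - chi *m th) i 0) ^+ 2.

Definition rls_cov r (Rm : 'M[R]_(r, p)) (th : 'cV[R]_p) : 'M[R]_p :=
  let B := invmx (chi^T *m chi) in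
  let Mr := B *m Rm^T *m invmx (Rm *m B *m Rm^T) in
  let e := Y - chi *m th in
  let Sig := B *m chi^T *m diag_mx (\row_i (e i 0 ^+ 2)) *m chi *m B in
  let P := 1%:M - Mr *m Rm in
  P *m Sig *m P^T.

Lemma ols_normal_eq d (D : 'M[R]_(n, d)) :
  D^T *m D \in unitmx -> D^T *m (Y - D *m ols Y D) = 0.
Proof. by move=> DD_unit; rewrite /ols mulmxBr !mulmxA (mulmxV DD_unit) mul1mx subrr. Qed.

Hypothesis gram_chi : chi^T *m chi \in unitmx.

Variables (r m : nat) (Rm : 'M[R]_(r, p)) (A : 'M[R]_(p, m)).
Variables (S : 'M[R]_(p, r)) (L : 'M[R]_(m, p)).
Hypotheses (RmA : Rm *m A = 0) (RmS : Rm *m S = 1%:M) (LA : L *m A = 1%:M).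
Hypothesis dim_p : (r + m)%N = p.
(* [S] and [L] certify that [Rm] has full row rank and [A] full column rank, so
   with [dim_p] the columns of [A] form a basis of [ker Rm]. *)

Local Notation G := (chi^T *m chi).
Local Notation B := (invmx G).
Local Notation H := (invmx ((chi *m A)^T *m (chi *m A))).
Local Notation P := (1%:M - B *m Rm^T *m invmx (Rm *m B *m Rm^T) *m Rm).

Lemma trmx_gram_inv : B^T = B.
Proof. by rewrite trmx_inv trmx_mul trmxK. Qed.

Lemma chi_inj (y : 'cV_p) : chi *m y = 0 -> y = 0.
Proof. by move=> chi_y0; rewrite -[y]mul1mx -(mulVmx gram_chi) -!mulmxA chi_y0 !mulmx0. Qed.

Lemma gram_A_unit : (chi *m A)^T *m (chi *m A) \in unitmx.
Proof.
apply: gram_unit => z; rewrite -mulmxA => /chi_inj Az0.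
by rewrite -[z]mul1mx -LA -mulmxA Az0 mulmx0.
Qed.

Lemma gram_Rm_unit : Rm *m B *m Rm^T \in unitmx.
Proof.
have -> : Rm *m B *m Rm^T = (chi *m (B *m Rm^T))^T *m (chi *m (B *m Rm^T)).
  rewrite trmx_mul (trmx_mul B) trmxK trmx_gram_inv !mulmxA.
  by rewrite -(mulmxA (Rm *m B) chi^T) -[Rm *m B *m G]mulmxA (mulVmx gram_chi) mulmx1.
apply: gram_unit => z; rewrite -mulmxA => /chi_inj BRz0.
have Rz0 : Rm^T *m z = 0.
  by rewrite -[_ *m z]mul1mx -(mulmxV gram_chi) -mulmxA (mulmxA B) BRz0 mulmx0.
by rewrite -[z]mul1mx -trmx1 -RmS trmx_mul -mulmxA Rz0 mulmx0.
Qed.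

Lemma kernel_basis k (V : 'M[R]_(p, k)) : Rm *m V = 0 -> exists Z : 'M_(m, k), V = A *m Z.
Proof.
move=> RmV0.
have rankA : \rank A^T = m.
  apply/eqP; rewrite mxrank_tr eqn_leq rank_leq_col /=.
  by rewrite -{1}(mxrank1 R m) -LA mxrankM_maxr.
have rankRm : \rank Rm = r.
  apply/eqP; rewrite eqn_leq rank_leq_row /=.
  by rewrite -{1}(mxrank1 R r) -RmS mxrankM_maxl.
have ker_rank : \rank (kermx Rm^T) = m by rewrite mxrank_ker mxrank_tr rankRm -dim_p addKn.
have A_ker : (A^T <= kermx Rm^T)%MS by apply/sub_kermxP; rewrite -trmx_mul RmA trmx0.
have [_] := mxrank_leqif_sup A_ker; rewrite rankA ker_rank eqxx => /esym ker_A.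
have V_ker : (V^T <= kermx Rm^T)%MS by apply/sub_kermxP; rewrite -trmx_mul RmV0 trmx0.
have /submxP [Z VZ] := submx_trans V_ker ker_A.
by exists Z^T; rewrite -[V]trmxK VZ trmx_mul trmxK.
Qed.

Lemma rls_reparam th : Rm *m th = 0 -> (forall th', Rm *m th' = 0 -> sse th <= sse th') ->
  th = A *m ols Y (chi *m A).
Proof.
move=> Rth; have [z ->] := kernel_basis Rth; move=> th_min.
set b := ols Y (chi *m A).
set e := Y - chi *m A *m b; set d := chi *m A *m (b - z).
have ed0 : e^T *m d = 0.
  by rewrite /d mulmxA -(trmxK (chi *m A)) -trmx_mul ols_normal_eq ?gram_A_unit // trmx0 mul0mx.
have de0 : d^T *m e = 0 by rewrite -[e]trmxK -trmx_mul ed0 trmx0.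
have sse_split : sse (A *m z) = sse (A *m b) + (d^T *m d) 0 0.
  rewrite /sse.
  have -> : Y - chi *m (A *m b) = e by rewrite mulmxA.
  have -> : Y - chi *m (A *m z) = e + d by rewrite /e /d mulmxBr addrA subrK mulmxA.
  rewrite -!sqnormE [(e + d)^T]linearD /= mulmxDl (mulmxDr e^T) (mulmxDr d^T).
  by rewrite ed0 de0 addr0 add0r mxE.
have := th_min (A *m b); rewrite mulmxA RmA mul0mx sse_split => /(_ erefl).
rewrite gerDl => d_le0.
have /sqnorm_eq0 : (d^T *m d) 0 0 = 0 by apply/eqP; rewrite eq_le d_le0 sqnorm_ge0.
rewrite /d -mulmxA => /chi_inj Abz0.
have /eqP : b - z = 0 by rewrite -[b - z]mul1mx -LA -mulmxA Abz0 mulmx0.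
by rewrite subr_eq0 => /eqP->.
Qed.

Lemma Rm_proj : Rm *m P = 0.
Proof. by rewrite mulmxBr mulmx1 !mulmxA (mulmxV gram_Rm_unit) mul1mx subrr. Qed.

Lemma proj_A : P *m A = A.
Proof. by rewrite mulmxBl mul1mx -(mulmxA _ Rm A) RmA mulmx0 subr0. Qed.

Lemma trmx_proj_gram : (P *m B)^T = P *m B.
Proof.
have symW : (Rm *m B *m Rm^T)^T = Rm *m B *m Rm^T.
  by rewrite !trmx_mul trmxK trmx_gram_inv mulmxA.
rewrite trmx_mul trmx_gram_inv linearB /= trmx1 mulmxBr mulmx1 mulmxBl mul1mx.
by rewrite !trmx_mul trmx_inv symW trmxK trmx_gram_inv !mulmxA.
Qed.

Lemma proj_gram : P *m B = A *m H *m A^T.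
Proof.
apply/eqP; rewrite -subr_eq0; apply/eqP; set Q := _ - _.
have RmQ : Rm *m Q = 0.
  by rewrite /Q mulmxBr (mulmxA Rm P) Rm_proj mul0mx !(mulmxA Rm) RmA !mul0mx subrr.
have [Z QZ] := kernel_basis RmQ.
have QGA : Q *m G *m A = 0.
  have AHA : A *m H *m A^T *m G *m A = A.
    by rewrite -[RHS]mulmx1 -(mulVmx gram_A_unit) trmx_mul !mulmxA.
  rewrite /Q (mulmxBl (P *m B)) (mulmxBl (P *m B *m G)) -(mulmxA P B G) (mulVmx gram_chi).
  by rewrite mulmx1 proj_A AHA subrr.
have symQ : Q^T = Q.
  by rewrite /Q linearB /= trmx_proj_gram trmx_mul (trmx_mul A) trmx_inv trmx_mul !trmxK mulmxA.
have ZM0 : Z^T *m ((chi *m A)^T *m (chi *m A)) = 0.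
  by rewrite trmx_mul !mulmxA -trmx_mul -QZ symQ -(mulmxA Q) QGA.
have Z0 : Z = 0.
  by apply: trmx_inj; rewrite trmx0 -[Z^T]mulmx1 -(mulmxV gram_A_unit) (mulmxA Z^T) ZM0 mul0mx.
by rewrite QZ Z0 mulmx0.
Qed.

Lemma rls_cov_reparam th : Rm *m th = 0 ->
  (forall th', Rm *m th' = 0 -> sse th <= sse th') ->
  rls_cov Rm th = A *m ehw Y (chi *m A) *m A^T.
Proof.
move=> Rth th_min; rewrite /rls_cov /ehw /= (rls_reparam Rth th_min) mulmxA.
set E := diag_mx _; set C := chi^T *m E *m chi.
have gram_proj : B *m P^T = A *m H *m A^T.
  by rewrite -proj_gram -trmx_proj_gram trmx_mul trmx_gram_inv.
have -> : P *m (B *m chi^T *m E *m chi *m B) *m P^T = (P *m B) *m C *m (B *m P^T).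
  by rewrite /C !mulmxA.
by rewrite gram_proj proj_gram /C trmx_mul !mulmxA.
Qed.

End RestrictedLeastSquares.

(** * Orthogonality of factorial contrasts *)

Lemma eq_from_bits n q q' : (q < 2 ^ n)%N -> (q' < 2 ^ n)%N ->
  (forall e, (e < n)%N -> odd (q %/ 2 ^ e) = odd (q' %/ 2 ^ e)) -> q = q'.
Proof.
elim: n q q' => [|n IHn] q q'; first by rewrite !ltnS !leqn0 => /eqP-> /eqP->.
move=> lt_q lt_q' eq_bits.
rewrite -[q]odd_double_half -[q']odd_double_half.
have := eq_bits 0 isT; rewrite !divn1 => ->; congr (_ + _.*2).
apply: IHn => [||e lt_en]; rewrite -?divn2.
- by rewrite ltn_divLR // -expnSr.
- by rewrite ltn_divLR // -expnSr.
- by have := eq_bits e.+1 lt_en; rewrite expnS !divnMA.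
Qed.

Section LevelSigns.
Variables (R : realFieldType) (K : nat).
Local Notation Q := (2 ^ K)%N.

Definition level_bits (q : 'I_Q) : {ffun 'I_K -> bool} :=
  [ffun k : 'I_K => odd (q %/ 2 ^ (K - k.+1))].

Lemma level_bits_bij : bijective level_bits.
Proof.
apply: inj_card_bij; last by rewrite card_ffun !card_ord card_bool.
move=> q q' eq_qq'; apply: val_inj.
apply: (eq_from_bits (ltn_ord q) (ltn_ord q')) => e lt_eK.
have lt_k : (K - e.+1 < K)%N by lia.
move/ffunP/(_ (Ordinal lt_k)): eq_qq'; rewrite !ffunE /=.
by have -> : (K - (K - e.+1).+1 = e)%N by lia.
Qed.

Lemma sum_levels_prod (F : 'I_K -> bool -> R) :
  \sum_(q : 'I_Q) \prod_k F k (level_bits q k) = \prod_k (F k true + F k false).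
Proof.
transitivity (\prod_k \sum_(b : bool) F k b); last first.
  by apply: eq_bigr => k _; rewrite big_bool.
rewrite bigA_distr_bigA /=; symmetry.
exact: (reindex _ (onW_bij _ level_bits_bij)).
Qed.

Definition zprod (q : 'I_Q) (S : {set 'I_K}) : R := \prod_(k in S) zlev R q k.

Definition zsign (S : {set 'I_K}) k (b : bool) : R :=
  if k \in S then (if b then 1 else -1) else 1.

Lemma zprodE q S : zprod q S = \prod_k zsign S k (level_bits q k).
Proof. by rewrite /zprod big_mkcond; apply: eq_bigr => k _; rewrite ffunE. Qed.

Lemma sum_zprodM S T :
  \sum_(q : 'I_Q) zprod q S * zprod q T = if S == T then Q%:R else 0.
Proof.
under eq_bigr => q _ do rewrite !zprodE -big_split /=.
rewrite (sum_levels_prod (fun k b => zsign S k b * zsign T k b)).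
case: eqVneq => [<-|neqST].
  rewrite (eq_bigr (fun _ => 2%:R)) => [|k _]; last first.
    by rewrite /zsign; case: ifP; rewrite /= ?mulrNN mulr1.
  by rewrite prodr_const card_ord natrX.
have [k neq_k] : exists k, (k \in S) != (k \in T).
  apply/existsP; apply: contraNT neqST => /existsPn eq_mem.
  by apply/eqP/setP => k; apply/eqP; rewrite -[_ == _]negbK eq_mem.
rewrite (bigD1 k) //= /zsign; move: neq_k.
by case: (k \in S); case: (k \in T) => //= _; rewrite !(mulr1, mul1r, mulN1r) subrr mul0r.
Qed.

End LevelSigns.

Section Contrasts.
Variables (R : realFieldType) (K : nat).
Local Notation Q := (2 ^ K)%N.
Implicit Types F : {set {set 'I_K}}.

Lemma sum_zprod S : S != set0 -> \sum_(q : 'I_Q) zprod R q S = 0.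
Proof.
move=> S_neq0; transitivity (\sum_(q : 'I_Q) zprod R q S * zprod R q set0).
  by apply: eq_bigr => q _; rewrite /zprod big_set0 mulr1.
by rewrite sum_zprodM (negbTE S_neq0).
Qed.

Lemma exp2_neq0 : Q%:R != 0 :> R.
Proof. by rewrite pnatr_eq0 expn_eq0. Qed.

Definition Zmx F : 'M[R]_(Q, #|F|) :=
  \matrix_(q, s) zprod R q (enum_val s).

Lemma CS_Zmx F1 F2 : CS R F1 *m Zmx F2 =
  \matrix_(i, s) (if enum_val i == enum_val s then 2%:R else 0).
Proof.
apply/matrixP => i s; rewrite !mxE.
transitivity (2%:R / Q%:R * \sum_(q : 'I_Q) zprod R q (enum_val i) * zprod R q (enum_val s)).
  by rewrite mulr_sumr; apply: eq_bigr => q _; rewrite !mxE mulrA.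
rewrite sum_zprodM; case: eqP => _; last by rewrite mulr0.
by rewrite mulrAC -mulrA divff ?exp2_neq0 // mulr1.
Qed.

Lemma CS_Zmx_id F : CS R F *m Zmx F = 2%:R%:M.
Proof. by rewrite CS_Zmx; apply/matrixP => i s; rewrite !mxE (inj_eq enum_val_inj); case: eqP. Qed.

Lemma CS_Zmx_disjoint F1 F2 : [disjoint F1 & F2] -> CS R F1 *m Zmx F2 = 0.
Proof.
move=> disj; rewrite CS_Zmx; apply/matrixP => i s; rewrite !mxE.
case: eqP => // eq_is; have := enum_valP s.
by rewrite -eq_is (disjointFr disj (enum_valP i)).
Qed.

Definition CS_rinv F : 'M[R]_(Q, #|F|) := (Q%:R / 4%:R) *: (CS R F)^T.

Lemma CS_rinvK F : CS R F *m CS_rinv F = 1%:M.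
Proof.
rewrite /CS_rinv.
have -> : (CS R F)^T = (2%:R / Q%:R) *: Zmx F by apply/matrixP => q i; rewrite !mxE.
rewrite scalerA -scalemxAr CS_Zmx_id scale_scalar_mx.
by congr _%:M; field; rewrite exp2_neq0.
Qed.

Lemma CS_one F : set0 \notin F -> CS R F *m const_mx 1 = 0 :> 'cV_#|F|.
Proof.
move=> F_neq0; apply/matrixP => i j; rewrite !mxE.
under eq_bigr => q _ do rewrite !mxE mulr1.
rewrite -mulr_sumr sum_zprod ?mulr0 //.
by apply: contraNneq F_neq0 => <-; exact: enum_valP.
Qed.

Lemma one_Zmx F : set0 \notin F -> const_mx 1 *m Zmx F = 0 :> 'rV_#|F|.
Proof.
move=> F_neq0; apply/matrixP => i s; rewrite !mxE.
under eq_bigr => q _ do rewrite !mxE mul1r.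
by rewrite sum_zprod //; apply: contraNneq F_neq0 => <-; exact: enum_valP.
Qed.

Lemma one_one : (const_mx 1 : 'rV[R]_Q) *m const_mx 1 = Q%:R%:M :> 'M[R]_1.
Proof.
apply/matrixP => i j; rewrite !mxE !ord1 /=.
under eq_bigr => q _ do rewrite !mxE mulr1.
by rewrite sumr_const card_ord.
Qed.

End Contrasts.

(** * The three factor-unsaturated regressions *)

Section Design.
Variables (R : realFieldType) (K N J : nat) (w : 'I_N -> 'I_(2 ^ K)) (X : 'M[R]_(N, J)).
Variables (Y : 'cV[R]_N) (Fp : {set {set 'I_K}}).
Local Notation Q := (2 ^ K)%N.
Local Notation Fm := (Fminus Fp).

Lemma equivalence_reparam d r (D : 'M[R]_(N, d)) (Rm : 'M[R]_(r, Q + Q * J))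
    (A : 'M[R]_(Q + Q * J, d)) (S : 'M[R]_(Q + Q * J, r)) (L : 'M[R]_(d, Q + Q * J)) :
  (chiL w X)^T *m chiL w X \in unitmx ->
  Rm *m A = 0 -> Rm *m S = 1%:M -> L *m A = 1%:M -> (r + d)%N = (Q + Q * J)%N ->
  chiL w X *m A = D -> CS R Fp *m usubmx A = 2%:R *: selZ R Fp d ->
  equivalence w X Y Fp D Rm.
Proof.
move=> gram_chi RmA RmS LA dim_p <- CS_A th [Rth th_min].
have th_eq := rls_reparam gram_chi RmA RmS LA dim_p Rth th_min.
have cov_eq := rls_cov_reparam gram_chi RmA RmS LA dim_p Rth th_min.
split; first by rewrite /tau_u th_eq -mul_usub_mx mulmxA CS_A -scalemxAl.
have -> : Psi_r w X Y Rm th = ulsubmx (rls_cov (chiL w X) Y Rm th) by [].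
rewrite cov_eq /ulsubmx -!mul_usub_mx -mulmx_lsub -trmx_usub.
set U := usubmx A; set E := ehw Y (chiL w X *m A).
have -> : CS R Fp *m (U *m E *m U^T) *m (CS R Fp)^T = (CS R Fp *m U) *m E *m (CS R Fp *m U)^T.
  by rewrite trmx_mul !mulmxA.
rewrite CS_A /Omega_u linearZ /= -!scalemxAl -scalemxAr scalerA -natrM.
by rewrite !mulmxA.
Qed.

Lemma Fminus0 : set0 \notin Fm.
Proof. by rewrite !inE eqxx. Qed.

Lemma disjoint_Fminus : [disjoint Fm & Fp].
Proof. by rewrite disjoint_subset; apply/subsetP => S; rewrite !inE => /andP[]. Qed.

Lemma selZ_row_mx d e : (#|Fp| < d)%N -> selZ R Fp (d + e) = row_mx (selZ R Fp d) 0.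
Proof.
move=> lt_Fd; apply/matrixP => j c; rewrite !mxE.
case: (split_ordP c) => c' ->; rewrite ?row_mxEl ?row_mxEr !mxE //=.
have := ltn_ord j => lt_jF.
by rewrite (_ : (d + c' == j.+1)%N = false) //; apply/negbTE/eqP; lia.
Qed.

Definition txmx : 'M[R]_(N, Q * J) := \matrix_(i, a) ((w i == kdiv a)%:R * X i (kmod a)).

Lemma chiLE : chiL w X = row_mx (rowsub w 1%:M) txmx.
Proof.
apply/matrixP => i c; rewrite mxE.
by case: (split_ordP c) => c' ->; rewrite ?row_mxEl ?row_mxEr !mxE.
Qed.

Lemma txmx_kron d (M : 'M[R]_(Q, d)) :
  txmx *m kron M 1%:M = \matrix_(i, b) (M (w i) (kdiv b) * X i (kmod b)).
Proof.
apply/matrixP => i b; rewrite !mxE.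
pose F q j := (q == w i)%:R * ((j == kmod b)%:R * (M q (kdiv b) * X i j)).
rewrite (eq_bigr (fun a => F (kdiv a) (kmod a))) => [|a _]; last first.
  by rewrite /F !mxE [w i == _]eq_sym; ring.
rewrite sum_kron; under eq_bigr => q _ do rewrite -mulr_sumr sum_delta.
exact: sum_delta.
Qed.

(* Parametrises the common slopes [θ_{γ,1} = ... = θ_{γ,Q}] of model (F). *)
Definition stackI : 'M[R]_(Q * J, J) := \matrix_(a, j) (kmod a == j)%:R.

Lemma txmx_stackI : txmx *m stackI = X.
Proof.
apply/matrixP => i j; rewrite !mxE.
pose F q j' := (q == w i)%:R * ((j' == j)%:R * X i j').
rewrite (eq_bigr (fun a => F (kdiv a) (kmod a))) => [|a _]; last first.
  by rewrite /F !mxE [w i == _]eq_sym; ring.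
rewrite sum_kron; under eq_bigr => q _ do rewrite -mulr_sumr sum_delta.
exact: (sum_delta (w i) (fun _ => X i j)).
Qed.

Lemma kron_stackI r (C : 'M[R]_(r, Q)) :
  C *m (const_mx 1 : 'cV_Q) = 0 -> kron C 1%:M *m stackI = 0.
Proof.
move=> C1; apply/matrixP => a j; rewrite !mxE.
pose F q j' := (j' == kmod a)%:R * ((j' == j)%:R * C (kdiv a) q).
rewrite (eq_bigr (fun b => F (kdiv b) (kmod b))) => [|b _]; last first.
  by rewrite /F !mxE [kmod a == _]eq_sym; ring.
rewrite sum_kron; under eq_bigr => q _ do rewrite sum_delta.
rewrite -mulr_sumr (_ : \sum_q C (kdiv a) q = 0) ?mulr0 //.
transitivity ((C *m (const_mx 1 : 'cV_Q)) (kdiv a) 0); last by rewrite C1 mxE.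
by rewrite mxE; apply: eq_bigr => q _; rewrite mxE mulr1.
Qed.

Lemma trstackI_stackI : stackI^T *m stackI = Q%:R%:M.
Proof.
apply/matrixP => j j'; rewrite !mxE.
pose F (q : 'I_Q) j'' := (j'' == j)%:R * (j'' == j')%:R : R.
rewrite (eq_bigr (fun a => F (kdiv a) (kmod a))) => [|a _]; last by rewrite /F !mxE.
rewrite sum_kron; under eq_bigr => q _ do rewrite sum_delta.
by rewrite sumr_const card_ord; case: (j == j'); rewrite ?mul0rn.
Qed.

Definition cumsum_mx : 'M[R]_(Q, Q.-1) := \matrix_(q, r) (q <= r)%:R.

Lemma diffmx_cumsum_mx : Defs.diffmx R K *m cumsum_mx = 1%:M.
Proof.
apply/matrixP => r r'; rewrite !mxE.
under eq_bigr => q _ do rewrite !mxE mulrBl.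
have lt_rQ : (r.+1 < Q)%N by have := ltn_ord r; lia.
rewrite sumrB !(sum_nat_delta (fun q => (q <= r')%:R)) //; last exact: ltnW.
case: ltngtP => [lt_rr'|lt_r'r|/val_inj->]; rewrite ?subrr ?eqxx ?subr0 //.
  by rewrite -val_eqE /= ltn_eqF.
by rewrite -val_eqE /= gtn_eqF.
Qed.

Lemma diffmx_one : Defs.diffmx R K *m const_mx 1 = 0 :> 'cV_Q.-1.
Proof.
apply/matrixP => r j; rewrite !mxE.
under eq_bigr => q _ do rewrite !mxE mulr1 -[(q == r :> nat)%:R]mulr1 -[(q == r.+1 :> nat)%:R]mulr1.
have lt_rQ : (r.+1 < Q)%N by have := ltn_ord r; lia.
by rewrite sumrB !(sum_nat_delta (fun _ => 1)) ?subrr // ltnW.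
Qed.

Hypothesis Fp0 : set0 \notin Fp.

Lemma card_Fplus_Fminus : (1 + #|Fp| + #|Fm|)%N = Q.
Proof.
have -> : Fm = ~: (set0 |: Fp) by apply/setP => S; rewrite !inE negb_or.
have card_sets : #|{set 'I_K}| = Q by rewrite -cardsT -powersetT card_powerset cardsT card_ord.
by rewrite -card_sets -(cardsC (set0 |: Fp)) cardsU1 Fp0.
Qed.

Definition basisY : 'M[R]_(Q, 1 + #|Fp|) := row_mx (const_mx 1) (Zmx R Fp).
Definition linvY : 'M[R]_(1 + #|Fp|, Q) :=
  col_mx ((Q%:R)^-1 *: const_mx 1) (2%:R^-1 *: CS R Fp).

Lemma linvY_basisY : linvY *m basisY = 1%:M.
Proof.
rewrite mul_col_row -!scalemxAl one_one one_Zmx // CS_one // CS_Zmx_id !scaler0.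
rewrite !scale_scalar_mx !mulVf ?exp2_neq0 ?pnatr_eq0 //.
by rewrite -scalar_mx_block.
Qed.

Lemma CS_basisY : CS R Fp *m basisY = row_mx 0 2%:R%:M.
Proof. by rewrite mul_mx_row CS_one // CS_Zmx_id. Qed.

Lemma CSminus_basisY : CS R Fm *m basisY = 0.
Proof.
by rewrite mul_mx_row CS_one ?Fminus0 // CS_Zmx_disjoint ?disjoint_Fminus // row_mx0.
Qed.

Lemma rowsub_basisY : rowsub w 1%:M *m basisY = design_N R w Fp.
Proof.
rewrite mul_rowsub_mx mul1mx; apply/matrixP => i c; rewrite mxE.
by case: (split_ordP c) => c' ->; rewrite ?row_mxEl ?row_mxEr !mxE.
Qed.

Lemma selZ_N : selZ R Fp (1 + #|Fp|) = row_mx 0 1%:M.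
Proof.
apply/matrixP => j c; rewrite !mxE.
case: (split_ordP c) => c' ->; rewrite ?row_mxEl ?row_mxEr !mxE /=; first by rewrite ord1.
by rewrite add1n eqSS eq_sym.
Qed.

Hypothesis gram_chiL : (chiL w X)^T *m chiL w X \in unitmx.

Definition basis_N : 'M[R]_(Q + Q * J, 1 + #|Fp|) := col_mx basisY 0.
Definition linv_N : 'M[R]_(1 + #|Fp|, Q + Q * J) := row_mx linvY 0.
Definition rinv_N : 'M[R]_(Q + Q * J, #|Fm| + Q * J) := block_mx (CS_rinv R Fm) 0 0 1%:M.

Lemma R_N_basis : R_N R J Fp *m basis_N = 0.
Proof. by rewrite mul_block_col CSminus_basisY !mulmx0 !mul0mx !addr0 col_mx0. Qed.

Lemma R_N_rinv : R_N R J Fp *m rinv_N = 1%:M.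
Proof.
by rewrite mulmx_block !mulmx0 !mul0mx !addr0 !add0r mul1mx CS_rinvK -scalar_mx_block.
Qed.

Lemma linv_basis_N : linv_N *m basis_N = 1%:M.
Proof. by rewrite mul_row_col linvY_basisY mulmx0 addr0. Qed.

Lemma chiL_basis_N : chiL w X *m basis_N = design_N R w Fp.
Proof. by rewrite chiLE mul_row_col mulmx0 addr0 rowsub_basisY. Qed.

Lemma CS_basis_N : CS R Fp *m usubmx basis_N = 2%:R *: selZ R Fp (1 + #|Fp|).
Proof. by rewrite col_mxKu CS_basisY selZ_N scale_row_mx scaler0 scalemx1. Qed.

Lemma equivalence_N : equivalence w X Y Fp (design_N R w Fp) (R_N R J Fp).
Proof.
apply: (equivalence_reparam gram_chiL R_N_basis R_N_rinv linv_basis_N _ chiL_basis_N CS_basis_N).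
by have := card_Fplus_Fminus; lia.
Qed.

Definition basis_F : 'M[R]_(Q + Q * J, 1 + #|Fp| + J) := row_mx basis_N (col_mx 0 stackI).
Definition linv_F : 'M[R]_(1 + #|Fp| + J, Q + Q * J) :=
  col_mx linv_N (row_mx 0 ((Q%:R)^-1 *: stackI^T)).
Definition rinv_F : 'M[R]_(Q + Q * J, #|Fm| + Q.-1 * J) :=
  block_mx (CS_rinv R Fm) 0 0 (kron cumsum_mx 1%:M).

Lemma R_F_basis : R_F R J Fp *m basis_F = 0.
Proof.
rewrite mul_mx_row !mul_block_col CSminus_basisY !mulmx0 !mul0mx !addr0 !add0r.
by rewrite kron_stackI ?diffmx_one // !col_mx0 row_mx0.
Qed.

Lemma R_F_rinv : R_F R J Fp *m rinv_F = 1%:M.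
Proof.
rewrite mulmx_block !mulmx0 !mul0mx !addr0 !add0r CS_rinvK mul_kron diffmx_cumsum_mx mul1mx kron1.
by rewrite -scalar_mx_block.
Qed.

Lemma linv_basis_F : linv_F *m basis_F = 1%:M.
Proof.
rewrite mul_col_row linv_basis_N !mul_row_col !mulmx0 !mul0mx !addr0 !add0r.
by rewrite -scalemxAl trstackI_stackI scale_scalar_mx mulVf ?exp2_neq0 // -scalar_mx_block.
Qed.

Lemma chiL_basis_F : chiL w X *m basis_F = design_F w X Fp.
Proof. by rewrite mul_mx_row chiL_basis_N chiLE mul_row_col mulmx0 add0r txmx_stackI. Qed.

Lemma CS_basis_F : CS R Fp *m usubmx basis_F = 2%:R *: selZ R Fp (1 + #|Fp| + J).
Proof.
rewrite usubmx_row_mx mul_mx_row CS_basis_N col_mxKu mulmx0 [in RHS]selZ_row_mx //.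
by rewrite scale_row_mx scaler0.
Qed.

Lemma equivalence_F : equivalence w X Y Fp (design_F w X Fp) (R_F R J Fp).
Proof.
apply: (equivalence_reparam gram_chiL R_F_basis R_F_rinv linv_basis_F _ chiL_basis_F CS_basis_F).
by have := card_Fplus_Fminus; nia.
Qed.

Lemma trstackI_kron_Zmx : stackI^T *m kron (Zmx R Fp) 1%:M = 0.
Proof.
apply: trmx_inj; rewrite trmx_mul trmxK trmx_kron trmx1 trmx0 kron_stackI //.
by rewrite -(trmx_const 1 Q (1 : R)) -trmx_mul one_Zmx // trmx0.
Qed.

Definition basis_L : 'M[R]_(Q + Q * J, 1 + #|Fp| + J + #|Fp| * J) :=
  row_mx basis_F (col_mx 0 (kron (Zmx R Fp) 1%:M)).
Definition linv_L : 'M[R]_(1 + #|Fp| + J + #|Fp| * J, Q + Q * J) :=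
  col_mx linv_F (row_mx 0 (2%:R^-1 *: kron (CS R Fp) 1%:M)).
Definition rinv_L : 'M[R]_(Q + Q * J, #|Fm| + #|Fm| * J) :=
  block_mx (CS_rinv R Fm) 0 0 (kron (CS_rinv R Fm) 1%:M).

Lemma R_L_basis : R_L R J Fp *m basis_L = 0.
Proof.
rewrite !mul_mx_row !mul_block_col CSminus_basisY !mulmx0 !mul0mx !addr0 !add0r.
rewrite kron_stackI ?CS_one ?Fminus0 // mul_kron CS_Zmx_disjoint ?disjoint_Fminus //.
by rewrite kron0l !col_mx0 !row_mx0.
Qed.

Lemma R_L_rinv : R_L R J Fp *m rinv_L = 1%:M.
Proof.
rewrite mulmx_block !mulmx0 !mul0mx !addr0 !add0r CS_rinvK mul_kron CS_rinvK mul1mx kron1.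
by rewrite -scalar_mx_block.
Qed.

Lemma linv_basis_L : linv_L *m basis_L = 1%:M.
Proof.
rewrite mul_col_row linv_basis_F mul_col_mx !mul_row_col !mulmx0 !mul0mx !addr0 !add0r.
rewrite -scalemxAl trstackI_kron_Zmx scaler0 col_mx0.
rewrite mul_mx_row !mul_row_col !mulmx0 !mul0mx !addr0 !add0r -!scalemxAl.
rewrite kron_stackI ?CS_one // scaler0 row_mx0 mul_kron CS_Zmx_id mul1mx -(scalemx1 _ 2%:R).
by rewrite kronZl kron1 scalerA mulVf ?pnatr_eq0 // scale1r -scalar_mx_block.
Qed.

Lemma chiL_basis_L : chiL w X *m basis_L = design_L w X Fp.
Proof.
rewrite mul_mx_row chiL_basis_F chiLE mul_row_col mulmx0 add0r txmx_kron.
by congr row_mx; apply/matrixP => i b; rewrite !mxE.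
Qed.

Lemma CS_basis_L : CS R Fp *m usubmx basis_L = 2%:R *: selZ R Fp (1 + #|Fp| + J + #|Fp| * J).
Proof.
rewrite usubmx_row_mx mul_mx_row CS_basis_F col_mxKu mulmx0 [in RHS]selZ_row_mx; last by lia.
by rewrite scale_row_mx scaler0.
Qed.

Lemma equivalence_L : equivalence w X Y Fp (design_L w X Fp) (R_L R J Fp).
Proof.
apply: (equivalence_reparam gram_chiL R_L_basis R_L_rinv linv_basis_L _ chiL_basis_L CS_basis_L).
by have := card_Fplus_Fminus; nia.
Qed.

End Design.

Theorem proposition2 (R : realFieldType) (K N J : nat)
  (w : 'I_N -> 'I_(2 ^ K)) (X : 'M[R]_(N, J)) (Y : 'cV[R]_N)
  (Fp : {set {set 'I_K}}) :
  set0 \notin Fp ->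
  Fminus Fp != set0 ->
  (forall j : 'I_J, \sum_(i < N) X i j = 0) ->
  (chiL w X)^T *m chiL w X \in unitmx ->
  [/\ equivalence w X Y Fp (design_N R w Fp) (R_N R J Fp),
      equivalence w X Y Fp (design_F w X Fp) (R_F R J Fp)
    & equivalence w X Y Fp (design_L w X Fp) (R_L R J Fp)].
Proof.
move=> Fp0 _ _ gram_chiL.
by split; [exact: equivalence_N | exact: equivalence_F | exact: equivalence_L].
Qed.
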